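(* Let $C=C(m,n;k,l;c,d)$ be a $C$-shaped supergrid graph and $s,t$ two distinct vertices of $C$ labeled so that $s_x\leq t_x$. If $C$ has a Hamiltonian path from $s$ to $t$, then $(C,s,t)$ satisfies none of the conditions (F1), (F3), (F7), (F8), (F9), where: (F1) $s$ or $t$ is a cut vertex of $C$, or $\{s,t\}$ is a vertex cut of $C$; (F3) there is a vertex $w\in V(C)$ with $\deg(w)=1$, $w\neq s$, $w\neq t$; (F7) $m=3$, $a=2$, and either ($c=1$ and $\{s,t\}=\{(1,1),(2,2)\}$ or $\{(1,2),(2,1)\}$) or ($d=1$ and $\{s,t\}=\{(1,n),(2,n-1)\}$ or $\{(1,n-1),(2,n)\}$); (F8) $n=3$, $k=c=d=1$, and one of: (1) $a\geq 2$, $s_x=t_x=m-1$, $|s_y-t_y|=2$; (2) $a=2$, $s_x=1$, $t_x=2$, $|s_y-t_y|=2$; (3) $a>2$, $s_x<m-1$, $t=(m-1,2)$; (F9) $a=1$, and ($s_y,t_y\leq c$ or $s_y,t_y>c+l$).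
   Context: The supergrid graph $S^\infty$ has vertex set $\mathbb{Z}^2$, two distinct vertices $u,v$ being adjacent iff $|u_x-v_x|\leq 1$ and $|u_y-v_y|\leq 1$; a supergrid graph is a finite vertex-induced subgraph of $S^\infty$. For integers $m\geq 2$, $n\geq 3$, $k,l,c\geq 1$ with $d=n-l-c\geq 1$ and $a=m-k\geq 1$, $C(m,n;k,l;c,d)$ is the supergrid graph induced by $\{(x,y):1\leq x\leq m,\ 1\leq y\leq n\}\setminus\{(x,y): a+1\leq x\leq m,\ c+1\leq y\leq c+l\}$. A cut vertex $v$: $C-v$ disconnected; a vertex cut $V_1$: $C-V_1$ disconnected. A Hamiltonian path from $s$ to $t$ is a simple path from $s$ to $t$ visiting every vertex exactly once. The paper assumes throughout that the given vertices are named so that $s_x\leq t_x$. *)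

(* vertices of S^oo restricted to positive coordinates are
   represented as pairs of naturals (x, y). *)
From mathcomp Require Import all_boot.
Set Implicit Arguments. Unset Strict Implicit. Unset Printing Implicit Defensive.

Definition vtx := (nat * nat)%type.

Definition sg_adj (u v : vtx) : bool :=
  [&& u != v, (u.1 <= v.1.+1) && (v.1 <= u.1.+1) & (u.2 <= v.2.+1) && (v.2 <= u.2.+1)].

(* vertex set of C(m,n;k,l;c,d), with a = m - k, d = n - l - c *)
Definition inC (m n k l c : nat) (v : vtx) : bool :=
  [&& 1 <= v.1 <= m, 1 <= v.2 <= n &
      ~~ ((m - k + 1 <= v.1 <= m) && (c + 1 <= v.2 <= c + l))].

Definition walk_in (P : vtx -> bool) (p : seq vtx) : Prop :=
  all P p /\ sorted sg_adj p.

Definition ham_path (P : vtx -> bool) (s t : vtx) : Prop :=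
  exists p : seq vtx,
    [/\ walk_in P p, uniq p, (forall v, P v -> v \in p),
        head s p = s /\ p != [::] & last s p = t].

Definition connected_in (P : vtx -> bool) : Prop :=
  forall u w, P u -> P w ->
    exists p : seq vtx, [/\ walk_in P (u :: p) & last u p = w].

Definition disconnected_in (P : vtx -> bool) : Prop := ~ connected_in P.

Definition cut_vertex (P : vtx -> bool) (v : vtx) : Prop :=
  P v /\ disconnected_in (fun u => P u && (u != v)).

Definition vertex_cut2 (P : vtx -> bool) (s t : vtx) : Prop :=
  P s /\ P t /\ disconnected_in (fun u => [&& P u, u != s & u != t]).

Definition vertsC (m n k l c : nat) : seq vtx :=
  [seq v <- [seq (x, y) | x <- iota 1 m, y <- iota 1 n] | inC m n k l c v].

Definition degC (m n k l c : nat) (w : vtx) : nat :=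
  count (sg_adj w) (vertsC m n k l c).

Definition dist2 (p q : nat) : Prop := p = q + 2 \/ q = p + 2.

Definition same_pair (s t u v : vtx) : Prop :=
  (s = u /\ t = v) \/ (s = v /\ t = u).

Definition F1 (m n k l c : nat) (s t : vtx) : Prop :=
  cut_vertex (inC m n k l c) s \/ cut_vertex (inC m n k l c) t \/
  vertex_cut2 (inC m n k l c) s t.

Definition F3 (m n k l c : nat) (s t : vtx) : Prop :=
  exists w, [/\ inC m n k l c w, degC m n k l c w = 1, w <> s & w <> t].

Definition F7 (m n k l c : nat) (s t : vtx) : Prop :=
  let a := m - k in let d := n - l - c in
  [/\ m = 3, a = 2 &
   (c = 1 /\ (same_pair s t (1,1) (2,2) \/ same_pair s t (1,2) (2,1))) \/
   (d = 1 /\ (same_pair s t (1,n) (2,n.-1) \/ same_pair s t (1,n.-1) (2,n)))].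

Definition F8 (m n k l c : nat) (s t : vtx) : Prop :=
  let a := m - k in let d := n - l - c in
  [/\ n = 3, k = 1, c = 1, d = 1 &
   [\/ [/\ 2 <= a, s.1 = m.-1, t.1 = m.-1 & dist2 s.2 t.2],
       [/\ a = 2, s.1 = 1, t.1 = 2 & dist2 s.2 t.2]
     | [/\ 2 < a, s.1 < m.-1 & t = (m.-1, 2)]]].

Definition F9 (m n k l c : nat) (s t : vtx) : Prop :=
  let a := m - k in
  a = 1 /\ ((s.2 <= c /\ t.2 <= c) \/ (c + l < s.2 /\ c + l < t.2)).

From mathcomp Require Import all_boot zify.
Set Implicit Arguments. Unset Strict Implicit.

(* Write the Hamiltonian path as an injective enumeration f 0 = s, ..., f (N-1) = t
   of the vertices.  Deleting s, t or both leaves a contiguous piece of the path, so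
   nothing is disconnected (F1), and every other vertex has two distinct neighbours
   on the path (F3).  A vertex other
   than s, t whose only neighbours are u and v sits between u and v on the path;
   at the corners next to the notch this pins down the first or last few vertices
   of the path, and then either two corners compete for one position, or the path
   is forced to have five vertices while C has at least six (F7, F8).  Otherwise,
   since the y-coordinate changes by at most one per step, a path starting and
   ending below some row and visiting a vertex above it meets that row twice, which
   is impossible when only one vertex of the row is available (F7, F9).  The
   reflection y |-> n+1-y maps C(m,n;k,l;c,d) onto C(m,n;k,l;d,c) and reduces the
   symmetric cases to these. *)

Lemma sg_adjE u v : sg_adj u v =
  [&& (u.1 != v.1) || (u.2 != v.2), u.1 <= v.1.+1, v.1 <= u.1.+1,
      u.2 <= v.2.+1 & v.2 <= u.2.+1].
Proof. by case: u v => [x y] [x' y']; rewrite /sg_adj xpair_eqE negb_and /= !andbA. Qed.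

Lemma sg_adjC u v : sg_adj u v = sg_adj v u.
Proof. by apply/idP/idP; rewrite !sg_adjE; lia. Qed.

Definition reachable (Q : vtx -> bool) (u w : vtx) : Prop :=
  exists p : seq vtx, walk_in Q (u :: p) /\ last u p = w.

Lemma reachable_refl (Q : vtx -> bool) u : Q u -> reachable Q u u.
Proof. by move=> Qu; exists [::]; rewrite /walk_in /= Qu. Qed.

Lemma reachable_adj (Q : vtx -> bool) u w :
  Q u -> Q w -> sg_adj u w -> reachable Q u w.
Proof. by move=> Qu Qw uw; exists [:: w]; rewrite /walk_in /= Qu Qw uw. Qed.

Lemma reachable_trans (Q : vtx -> bool) u v w :
  reachable Q u v -> reachable Q v w -> reachable Q u w.
Proof.
move=> [p [[/= /andP[Qu Qp] up] <-]] [q [[/= /andP[_ Qq] vq] <-]].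
exists (p ++ q); rewrite last_cat; split=> //; split.
- by rewrite /= Qu all_cat Qp Qq.
- by rewrite /= cat_path up vq.
Qed.

Lemma nat_ivt (h : nat -> nat) i j y : i <= j ->
  (forall k, i <= k < j -> h k.+1 <= (h k).+1 /\ h k <= (h k.+1).+1) ->
  minn (h i) (h j) <= y <= maxn (h i) (h j) -> exists2 k, i <= k <= j & h k = y.
Proof.
elim: j => [|j IH] ij lip hy.
  by move: ij hy; rewrite leqn0 => /eqP-> hy; exists 0; lia.
have [eij|ne_ij] := eqVneq i j.+1; first by subst i; exists j.+1 => //; lia.
have ij' : i <= j by lia.
have [hyj|hyj] := boolP (minn (h i) (h j) <= y <= maxn (h i) (h j)).
  have [k ik hk] := IH ij' (fun k hk => lip k ltac:(lia)) hyj.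
  by exists k => //; lia.
by exists j.+1; [lia | have := lip j ltac:(lia); lia].
Qed.

Definition ham_walk (P : vtx -> bool) (f : nat -> vtx) (N : nat) : Prop :=
  [/\ 0 < N, (forall i, i.+1 < N -> sg_adj (f i) (f i.+1)),
      (forall i j, i < N -> j < N -> f i = f j -> i = j),
      (forall i, i < N -> P (f i)) &
      (forall v, P v -> exists2 i, i < N & f i = v)].

Lemma ham_pathP (P : vtx -> bool) s t :
  ham_path P s t -> exists f N, [/\ ham_walk P f N, f 0 = s & f N.-1 = t].
Proof.
move=> [p [[Pp adj_p] uniq_p cover_p [head_p p_ne0] last_p]].
exists (nth s p), (size p); split; last first.
- by rewrite nth_last.
- by case: p head_p p_ne0 {Pp adj_p uniq_p cover_p last_p}.
split.
- by rewrite lt0n size_eq0.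
- by move=> i; move/(sortedP s): adj_p; apply.
- by move=> i j ip jp /eqP; rewrite nth_uniq // => /eqP.
- by move=> i; move/(all_nthP s): Pp; apply.
- by move=> v /cover_p vp; exists (index v p); rewrite ?index_mem ?nth_index.
Qed.

Definition nbrs_sub (P : vtx -> bool) (w : vtx) (ns : seq vtx) : Prop :=
  forall v, P v -> sg_adj w v -> v \in ns.

Lemma nbrs_sub2C P w u v : nbrs_sub P w [:: u; v] -> nbrs_sub P w [:: v; u].
Proof. by move=> nb x Px wx; move: (nb x Px wx); rewrite !inE orbC. Qed.

Section HamWalk.

Variables (P : vtx -> bool) (f : nat -> vtx) (N : nat).
Hypothesis hw : ham_walk P f N.

Lemma ham_walk_gt0 : 0 < N.
Proof. by case: hw. Qed.

Lemma ham_walk_adj i : i.+1 < N -> sg_adj (f i) (f i.+1).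
Proof. by case: hw => _ adj _ _ _; apply: adj. Qed.

Lemma ham_walk_inj i j : f i = f j -> i < N -> j < N -> i = j.
Proof. by case: hw => _ _ inj _ _ fij iN jN; apply: inj. Qed.

Lemma ham_walk_in i : i < N -> P (f i).
Proof. by case: hw => _ _ _ inP _; apply: inP. Qed.

Lemma ham_walk_cover v : P v -> exists2 i, i < N & f i = v.
Proof. by case: hw => _ _ _ _ cover; apply: cover. Qed.

Lemma ham_walk_eq i j : i < N -> j < N -> (f i == f j) = (i == j).
Proof. by move=> iN jN; apply/eqP/eqP => [fij|->] //; apply: ham_walk_inj. Qed.

Lemma ham_walk_mem_map i ks : i < N -> all (gtn N) ks ->
  (f i \in map f ks) = (i \in ks).
Proof.
move=> iN; elim: ks => [|j ks IH] //= /andP[jN ksN].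
by rewrite !inE IH // ham_walk_eq.
Qed.

Lemma ham_walk_size vs : uniq vs -> all P vs -> size vs <= N.
Proof.
move=> uniq_vs /allP Pvs; rewrite -(size_iota 0 N) -(size_map f).
apply: uniq_leq_size => // v /Pvs /ham_walk_cover [i iN <-].
by rewrite map_f // mem_iota.
Qed.

Lemma ham_walk_connected_segment (Q : vtx -> bool) lo hi : hi <= N ->
  (forall u, Q u -> P u) -> (forall k, k < N -> Q (f k) = (lo <= k < hi)) ->
  connected_in Q.
Proof.
move=> hiN QP Qf.
have reach i d : lo <= i -> i + d < hi ->
    reachable Q (f i) (f (i + d)) /\ reachable Q (f (i + d)) (f i).
  move=> loi; elim: d => [|d IH] hid.
    by rewrite addn0; split; apply: reachable_refl; rewrite Qf; lia.
  have [fwd bwd] := IH ltac:(lia).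
  have Q1 : Q (f (i + d)) by rewrite Qf; lia.
  have Q2 : Q (f (i + d.+1)) by rewrite Qf; lia.
  have a : sg_adj (f (i + d)) (f (i + d.+1)).
    by rewrite addnS; apply: ham_walk_adj; lia.
  split; first exact: reachable_trans fwd (reachable_adj Q1 Q2 a).
  by apply: reachable_trans bwd; apply: reachable_adj; rewrite // sg_adjC.
move=> u w Qu Qw.
have [i iN fi] := ham_walk_cover (QP _ Qu); have [j jN fj] := ham_walk_cover (QP _ Qw).
move: Qu Qw; rewrite -fi -fj !Qf // => /andP[loi ihi] /andP[loj jhi].
have [ij|ji] := leqP i j.
  by have [+ _] := reach i (j - i) loi ltac:(lia); rewrite subnKC.
by have [_ +] := reach j (i - j) loj ltac:(lia); rewrite subnKC 1?ltnW.
Qed.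

Lemma ham_walk_no_cut :
  ~ (cut_vertex P (f 0) \/ cut_vertex P (f N.-1) \/ vertex_cut2 P (f 0) (f N.-1)).
Proof.
have N0 := ham_walk_gt0.
case=> [[_ []]|[[_ []]|[_ [_ []]]]].
- apply: (ham_walk_connected_segment (lo := 1) (leqnn N)) => [u /andP[]//|k kN].
  by rewrite ham_walk_in // ham_walk_eq //; lia.
- apply: (ham_walk_connected_segment (lo := 0) (leq_pred N)) => [u /andP[]//|k kN].
  by rewrite ham_walk_in // ham_walk_eq //; lia.
- apply: (ham_walk_connected_segment (lo := 1) (leq_pred N)) => [u /and3P[]//|k kN].
  by rewrite ham_walk_in // !ham_walk_eq //; lia.
Qed.

Lemma ham_walk_interior j : 0 < j < N.-1 ->
  [/\ P (f j.-1), P (f j.+1), sg_adj (f j) (f j.-1), sg_adj (f j) (f j.+1)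
    & f j.-1 != f j.+1].
Proof.
move=> j_int; have jE : j.-1.+1 = j by lia.
split; try by apply: ham_walk_in; lia.
- by rewrite sg_adjC; have := @ham_walk_adj j.-1; rewrite jE; apply; lia.
- by apply: ham_walk_adj; lia.
- by rewrite ham_walk_eq; lia.
Qed.

Lemma ham_walk_index_interior w : P w -> w <> f 0 -> w <> f N.-1 ->
  exists2 j, 0 < j < N.-1 & f j = w.
Proof.
move=> /ham_walk_cover [j jN <-] ne0 neN; exists j => //.
have /eqP j0 : j != 0 by apply: contra_not_neq ne0 => ->.
have /eqP jN1 : j != N.-1 by apply: contra_not_neq neN => ->.
lia.
Qed.

Lemma ham_walk_nbrs_sub j ns : 0 < j < N.-1 -> nbrs_sub P (f j) ns ->
  [/\ f j.-1 \in ns, f j.+1 \in ns & f j.-1 != f j.+1].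
Proof. by move=> /ham_walk_interior[P1 P2 a1 a2 ne] nb; split => //; apply: nb. Qed.

Lemma ham_walk_deg2 j u v : 0 < j < N.-1 -> nbrs_sub P (f j) [:: u; v] ->
  (f j.-1 = u /\ f j.+1 = v) \/ (f j.-1 = v /\ f j.+1 = u).
Proof.
move=> j_int /(ham_walk_nbrs_sub j_int) [].
by rewrite !inE => /orP[]/eqP-> /orP[]/eqP->; rewrite ?eqxx //; [left|right].
Qed.

Lemma ham_walk_near_first w u : P w -> w <> f 0 -> w <> f N.-1 ->
  nbrs_sub P w [:: f 0; u] -> [/\ 2 < N, f 1 = w & f 2 = u].
Proof.
move=> Pw ne0 neN; have [j j_int <-] := ham_walk_index_interior Pw ne0 neN.
case/(ham_walk_deg2 j_int) => [[/ham_walk_inj j0 fj2] | [_ /ham_walk_inj j0]].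
  have j1 : j = 1 by have := j0 ltac:(lia) ltac:(lia); lia.
  by subst j; split => //; lia.
by have := j0 ltac:(lia) ltac:(lia); lia.
Qed.

Lemma ham_walk_near_last w u : P w -> w <> f 0 -> w <> f N.-1 ->
  nbrs_sub P w [:: u; f N.-1] -> [/\ 2 < N, f (N - 2) = w & f (N - 3) = u].
Proof.
move=> Pw ne0 neN; have [j j_int <-] := ham_walk_index_interior Pw ne0 neN.
case/(ham_walk_deg2 j_int) => [[fj1 /ham_walk_inj jN] | [/ham_walk_inj jN _]].
  have {}jN : j.+1 = N.-1 by apply: jN; lia.
  have -> : N - 2 = j by lia.
  have -> : N - 3 = j.-1 by lia.
  by split => //; lia.
by have := jN ltac:(lia) ltac:(lia); lia.
Qed.

Lemma ham_walk_bottleneck i i0 j r v : i <= i0 <= j -> j < N ->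
  (f i).2 <= r -> (f j).2 <= r -> r < (f i0).2 ->
  ~ (forall k, i <= k <= j -> (f k).2 = r -> f k = v).
Proof.
move=> /andP[ii0 i0j] jN fi fj fi0 row_r.
have lip k : k < j -> (f k.+1).2 <= (f k).2.+1 /\ (f k).2 <= (f k.+1).2.+1.
  by move=> kj; have := @ham_walk_adj k ltac:(lia); rewrite sg_adjE; lia.
have [k1 /andP[ik1 k1i0] fk1] :=
  nat_ivt (h := fun k => (f k).2) (y := r) ii0 (fun k hk => lip k ltac:(lia)) ltac:(lia).
have [k2 /andP[i0k2 k2j] fk2] :=
  nat_ivt (h := fun k => (f k).2) (y := r) i0j (fun k hk => lip k ltac:(lia)) ltac:(lia).
have k1_ne : k1 != i0 by apply: contraTneq fi0 => <-; rewrite fk1 ltnn.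
have k2_ne : k2 != i0 by apply: contraTneq fi0 => <-; rewrite fk2 ltnn.
have f12 : f k1 = f k2 :=
  etrans (row_r k1 ltac:(lia) fk1) (esym (row_r k2 ltac:(lia) fk2)).
by have := ham_walk_inj f12 ltac:(lia) ltac:(lia); lia.
Qed.

Lemma ham_walk_map (Q : vtx -> bool) (g : vtx -> vtx) :
  (forall u v, P u -> P v -> sg_adj u v -> sg_adj (g u) (g v)) ->
  (forall u v, P u -> P v -> g u = g v -> u = v) ->
  (forall u, P u -> Q (g u)) -> (forall w, Q w -> exists2 u, P u & g u = w) ->
  ham_walk Q (g \o f) N.
Proof.
move=> g_adj g_inj g_in g_onto; split.
- exact: ham_walk_gt0.
- move=> i iN; apply: g_adj; [apply: ham_walk_in; lia | exact: ham_walk_in |].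
  exact: ham_walk_adj.
- move=> i j iN jN /g_inj eq_fij.
  by apply: ham_walk_inj => //; apply: eq_fij; apply: ham_walk_in.
- by move=> i iN; apply/g_in/ham_walk_in.
- by move=> w /g_onto [u /ham_walk_cover [i iN <-] <-]; exists i.
Qed.

End HamWalk.

Definition mirror (n : nat) (v : vtx) : vtx := (v.1, n.+1 - v.2).

Lemma ham_walk_mirror m n k l c f N : c + l < n ->
  ham_walk (inC m n k l c) f N -> ham_walk (inC m n k l (n - l - c)) (mirror n \o f) N.
Proof.
move=> cln hw; apply: (ham_walk_map (g := mirror n) hw).
- by move=> [x y] [x' y']; rewrite /inC !sg_adjE /=; lia.
- by move=> [x y] [x' y']; rewrite /inC /= => Cu Cv [-> e]; congr pair; lia.
- by move=> [x y]; rewrite /inC /=; lia.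
- move=> [x y] Cw; exists (x, n.+1 - y); move: Cw; rewrite /inC /= => Cw.
    lia.
  by rewrite /mirror /=; congr pair; lia.
Qed.

Lemma nbrs_sub_corner_low m n l : 2 <= m -> 1 <= l ->
  nbrs_sub (inC m n 1 l 1) (m, 1) [:: (m.-1, 1); (m.-1, 2)].
Proof. by move=> m2 l1 [x y]; rewrite /inC sg_adjE !inE !xpair_eqE /=; lia. Qed.

Lemma nbrs_sub_corner_high m n l c : 2 <= m -> 1 <= l -> c + l = n.-1 ->
  nbrs_sub (inC m n 1 l c) (m, n) [:: (m.-1, n); (m.-1, n.-1)].
Proof. by move=> m2 l1 cln [x y]; rewrite /inC sg_adjE !inE !xpair_eqE /=; lia. Qed.

Lemma nbrs_sub_bottom_left m n k l c :
  nbrs_sub (inC m n k l c) (1, 1) [:: (1, 2); (2, 1); (2, 2)].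
Proof. by move=> [x y]; rewrite /inC sg_adjE !inE !xpair_eqE /=; lia. Qed.

Lemma nbrs_sub_top_left m n k l c :
  nbrs_sub (inC m n k l c) (1, n) [:: (1, n.-1); (2, n.-1); (2, n)].
Proof. by move=> [x y]; rewrite /inC sg_adjE !inE !xpair_eqE /=; lia. Qed.

Lemma no_ham_11_22 n l f N : 1 <= l -> l.+1 < n ->
  ham_walk (inC 3 n 1 l 1) f N -> f 0 = (1, 1) -> f N.-1 = (2, 2) -> False.
Proof.
move=> l1 ln hw f0 fN.
have [N3 fN2 fN3] : [/\ 2 < N, f (N - 2) = (3, 1) & f (N - 3) = (2, 1)].
  apply: (ham_walk_near_last hw); rewrite ?f0 ?fN //; first by rewrite /inC /=; lia.
  exact: nbrs_sub_corner_low.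
have /(ham_walk_cover hw) [i0 i0N fi0] : inC 3 n 1 l 1 (1, 3) by rewrite /inC /=; lia.
have i0_le : i0 <= N - 3.
  have : i0 <> N - 2 by move=> e; rewrite e fN2 in fi0.
  have : i0 <> N.-1 by move=> e; rewrite e fN in fi0.
  lia.
apply: (ham_walk_bottleneck hw (i := 0) (i0 := i0) (j := N - 3) (r := 2) (v := (1, 2)));
  rewrite ?f0 ?fN3 ?fi0 //; try lia.
move=> k /andP[_ kN] rowk.
have Cfk : inC 3 n 1 l 1 (f k) by apply: (ham_walk_in hw); lia.
have : f k != f N.-1 by rewrite (ham_walk_eq hw); lia.
rewrite fN; move: Cfk rowk; case: (f k) => x y; rewrite /inC /= => Cxy y2 ne.
by apply/eqP; move: ne; rewrite !xpair_eqE; lia.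
Qed.

Lemma no_ham_12_21 n l f N : 1 <= l -> l.+1 < n ->
  ham_walk (inC 3 n 1 l 1) f N -> f 0 = (1, 2) -> f N.-1 = (2, 1) -> False.
Proof.
move=> l1 ln hw f0 fN.
have [N3 fN2 fN3] : [/\ 2 < N, f (N - 2) = (3, 1) & f (N - 3) = (2, 2)].
  apply: (ham_walk_near_last hw); rewrite ?f0 ?fN //; first by rewrite /inC /=; lia.
  exact/nbrs_sub2C/nbrs_sub_corner_low.
have [j j_int fj] : exists2 j, 0 < j < N.-1 & f j = (1, 1).
  by apply: (ham_walk_index_interior hw); rewrite ?f0 ?fN // /inC /=; lia.
have jN2 : j <> N - 2 by move=> e; rewrite e fN2 in fj.
have nb : nbrs_sub (inC 3 n 1 l 1) (f j) (map f [:: 0; N.-1; N - 3]).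
  by rewrite fj /= f0 fN fN3; apply: nbrs_sub_bottom_left.
have N5 : N = 5.
  have [+ + _] := ham_walk_nbrs_sub hw j_int nb.
  by rewrite !(ham_walk_mem_map hw) /= ?inE; lia.
have : 6 <= N.
  apply: (ham_walk_size hw (vs := [:: (1, 1); (1, 2); (1, 3); (2, 1); (2, 2); (3, 1)])).
    by [].
  by rewrite /= /inC /=; lia.
by rewrite N5.
Qed.

Lemma no_ham_column_ends m f N : 3 <= m ->
  ham_walk (inC m 3 1 1 1) f N -> f 0 = (m.-1, 1) -> f N.-1 = (m.-1, 3) -> False.
Proof.
move=> m3 hw f0 fN.
have [N3 _ f2] : [/\ 2 < N, f 1 = (m, 1) & f 2 = (m.-1, 2)].
  apply: (ham_walk_near_first hw); rewrite ?f0 ?fN;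
    try by [rewrite /inC /=; lia | case; lia].
  by apply: nbrs_sub_corner_low; lia.
have [_ _ fN3] : [/\ 2 < N, f (N - 2) = (m, 3) & f (N - 3) = (m.-1, 2)].
  apply: (ham_walk_near_last hw); rewrite ?f0 ?fN;
    try by [rewrite /inC /=; lia | case; lia].
  by apply/nbrs_sub2C/nbrs_sub_corner_high; lia.
have N5 : N = 5.
  by have := ham_walk_inj hw (etrans f2 (esym fN3)) ltac:(lia) ltac:(lia); lia.
have : 6 <= N.
  apply: (ham_walk_size hw
    (vs := [:: (1, 1); (m.-1, 1); (m, 1); (m.-1, 2); (m.-1, 3); (m, 3)])).
    by rewrite /= !inE !xpair_eqE; lia.
  by rewrite /= /inC /=; lia.
by rewrite N5.
Qed.

Lemma no_ham_11_23 f N :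
  ham_walk (inC 3 3 1 1 1) f N -> f 0 = (1, 1) -> f N.-1 = (2, 3) -> False.
Proof.
move=> hw f0 fN.
have [N3 fN2 fN3] : [/\ 2 < N, f (N - 2) = (3, 3) & f (N - 3) = (2, 2)].
  apply: (ham_walk_near_last hw); rewrite ?f0 ?fN //.
  exact/nbrs_sub2C/nbrs_sub_corner_high.
have [j j_int fj] : exists2 j, 0 < j < N.-1 & f j = (3, 1).
  by apply: (ham_walk_index_interior hw); rewrite ?f0 ?fN.
have jN4 : j = N - 4.
  have nb : nbrs_sub (inC 3 3 1 1 1) (f j) [:: (2, 1); (2, 2)].
    by rewrite fj; apply: nbrs_sub_corner_low.
  have jN2 : j <> N - 2 by move=> e; rewrite e fN2 in fj.
  case: (ham_walk_deg2 hw j_int nb) => [[_ fj1] | [fj1 _]];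
    by have := ham_walk_inj hw (etrans fj1 (esym fN3)) ltac:(lia) ltac:(lia); lia.
have [i i_int fi] : exists2 i, 0 < i < N.-1 & f i = (1, 3).
  by apply: (ham_walk_index_interior hw); rewrite ?f0 ?fN.
have ij : i <> j by move=> e; rewrite e fj in fi.
have iN2 : i <> N - 2 by move=> e; rewrite e fN2 in fi.
have nb : nbrs_sub (inC 3 3 1 1 1) (f i) ((1, 2) :: map f [:: N - 3; N.-1]).
  by rewrite fi /= fN3 fN; apply: nbrs_sub_top_left.
(* One path neighbour of (1, 3) is f (N - 3) or t, which puts (1, 3) at the
   position of (3, 1) or of (3, 3). *)
have [] := ham_walk_nbrs_sub hw i_int nb.
rewrite !(@in_cons _ (1, 2)) !(ham_walk_mem_map hw) /= ?inE; try lia.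
move=> /orP[/eqP fi1 | hi1] /orP[/eqP fi2 | hi2] //; first by rewrite fi1 fi2.
all: lia.
Qed.

Lemma no_ham_to_notch m f N : 2 <= m ->
  ham_walk (inC m 3 1 1 1) f N -> (f 0).1 < m.-1 -> f N.-1 = (m.-1, 2) -> False.
Proof.
move=> m2 hw s_x fN.
have not_s y : (m, y) <> f 0 by move=> e; rewrite -e /= in s_x; lia.
have [_ fN2 _] : [/\ 2 < N, f (N - 2) = (m, 1) & f (N - 3) = (m.-1, 1)].
  apply: (ham_walk_near_last hw) => //; rewrite ?fN //; first by rewrite /inC /=; lia.
  exact: nbrs_sub_corner_low.
have [_ fN2' _] : [/\ 2 < N, f (N - 2) = (m, 3) & f (N - 3) = (m.-1, 3)].
  apply: (ham_walk_near_last hw) => //; rewrite ?fN //; first by rewrite /inC /=; lia.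
  exact: nbrs_sub_corner_high.
by rewrite fN2 in fN2'.
Qed.

Lemma no_ham_thin_arm m n k l c f N : m - k = 1 -> 1 <= l -> c + l < n ->
  ham_walk (inC m n k l c) f N -> (f 0).2 <= c -> (f N.-1).2 <= c -> False.
Proof.
move=> a1 l1 cln hw s_y t_y.
have N0 := ham_walk_gt0 hw.
have /(ham_walk_cover hw) [i0 i0N fi0] : inC m n k l c (1, n) by rewrite /inC /=; lia.
apply: (ham_walk_bottleneck hw (i := 0) (i0 := i0) (j := N.-1) (r := c.+1)
         (v := (1, c.+1)));
  rewrite ?fi0 //=; try lia.
move=> j jN; have := ham_walk_in hw (ltac:(lia) : j < N).
by case: (f j) => x y; rewrite /inC /= => Cxy y_c; apply/eqP; rewrite xpair_eqE; lia.
Qed.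

Lemma mem_vertsC m n k l c v : (v \in vertsC m n k l c) = inC m n k l c v.
Proof.
rewrite mem_filter; case Cv: (inC m n k l c v) => //=.
apply/allpairsP; exists v; case: v Cv => x y; rewrite /inC !mem_iota /= => Cv.
by split => //; lia.
Qed.

Lemma degC_ge2 m n k l c w u v : inC m n k l c u -> inC m n k l c v -> u != v ->
  sg_adj w u -> sg_adj w v -> 1 < degC m n k l c w.
Proof.
move=> Cu Cv uv wu wv; rewrite /degC -size_filter.
apply: (@uniq_leq_size _ [:: u; v]); first by rewrite /= inE uv.
by move=> x; rewrite !inE mem_filter mem_vertsC => /orP[]/eqP->; apply/andP.
Qed.

Lemma ham_walk_not_F3 m n k l c f N :
  ham_walk (inC m n k l c) f N -> ~ F3 m n k l c (f 0) (f N.-1).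
Proof.
move=> hw [w [Cw deg1 ne0 neN]].
have [j j_int fj] := ham_walk_index_interior hw Cw ne0 neN.
have [P1 P2 a1 a2 ne] := ham_walk_interior hw j_int.
by have := degC_ge2 P1 P2 ne a1 a2; rewrite fj deg1.
Qed.

Lemma no_ham_F7_c1 n l f N : 1 <= l -> l.+1 < n ->
  ham_walk (inC 3 n 1 l 1) f N -> (f 0).1 <= (f N.-1).1 ->
  ~ (same_pair (f 0) (f N.-1) (1, 1) (2, 2) \/ same_pair (f 0) (f N.-1) (1, 2) (2, 1)).
Proof.
move=> l1 ln hw le_st [[[s0 t0]|[s0 t0]]|[[s0 t0]|[s0 t0]]];
  rewrite ?s0 ?t0 // in le_st.
- exact: no_ham_11_22 hw s0 t0.
- exact: no_ham_12_21 hw s0 t0.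
Qed.

Lemma ham_walk_not_F7 m n k l c f N : 1 <= l -> 1 <= c -> c + l < n ->
  ham_walk (inC m n k l c) f N -> (f 0).1 <= (f N.-1).1 ->
  ~ F7 m n k l c (f 0) (f N.-1).
Proof.
move=> l1 c1 cln hw le_st [m3 a2 [[c_1 st]|[d1 st]]]; subst m.
  have k1 : k = 1 by lia.
  by subst k c; apply: (no_ham_F7_c1 l1 _ hw le_st st); lia.
have k1 : k = 1 by lia.
subst k; have hw' := ham_walk_mirror cln hw; rewrite d1 in hw'.
apply: (no_ham_F7_c1 l1 _ hw' le_st); first lia.
rewrite /=; case: st => [[[-> ->]|[-> ->]]|[[-> ->]|[-> ->]]];
  rewrite /mirror /= subSnn (_ : n.+1 - n.-1 = 2) //; try lia.
- by left; left.
- by left; right.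
- by right; left.
- by right; right.
Qed.

Lemma ham_walk_not_F8 m n k l c f N :
  ham_walk (inC m n k l c) f N -> ~ F8 m n k l c (f 0) (f N.-1).
Proof.
move=> hw [n3 k1 c1 d1 F8_cases]; subst n k c.
have l1 : l = 1 by lia.
subst l; have hw' := ham_walk_mirror (isT : 1 + 1 < 3) hw.
have [Cs Ct] : inC m 3 1 1 1 (f 0) /\ inC m 3 1 1 1 (f N.-1).
  by split; apply: (ham_walk_in hw); have := ham_walk_gt0 hw; lia.
move: Cs Ct F8_cases.
case E0 : (f 0) => [sx sy]; case EN : (f N.-1) => [tx ty]; rewrite /inC /=.
move=> Cs Ct [[a2 sx_m tx_m [gap|gap]] | [a2 sx1 tx2 [gap|gap]] | [a3 sx_m tE]].
- apply: (no_ham_column_ends _ hw'); rewrite /= ?E0 ?EN /mirror /=;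
    by try congr pair; lia.
- by apply: (no_ham_column_ends _ hw); rewrite ?E0 ?EN; try congr pair; lia.
- have m3 : m = 3 by lia.
  subst m; apply: (no_ham_11_23 hw'); rewrite /= ?E0 ?EN /mirror /=; congr pair; lia.
- have m3 : m = 3 by lia.
  by subst m; apply: (no_ham_11_23 hw); rewrite ?E0 ?EN; congr pair; lia.
- by apply: (no_ham_to_notch _ hw); rewrite ?E0 ?EN //; lia.
Qed.

Lemma ham_walk_not_F9 m n k l c f N : 1 <= l -> 1 <= c -> c + l < n ->
  ham_walk (inC m n k l c) f N -> ~ F9 m n k l c (f 0) (f N.-1).
Proof.
move=> l1 c1 cln hw [a1 [[s_y t_y]|[s_y t_y]]].
  exact: no_ham_thin_arm a1 l1 cln hw s_y t_y.
apply: (no_ham_thin_arm a1 l1 _ (ham_walk_mirror cln hw)) => /=; lia.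
Qed.

Theorem lemma7 (m n k l c : nat) (s t : nat * nat) :
  2 <= m -> 3 <= n -> 1 <= k -> 1 <= l -> 1 <= c ->
  1 <= n - l - c -> 1 <= m - k ->
  inC m n k l c s -> inC m n k l c t -> s <> t -> s.1 <= t.1 ->
  ham_path (inC m n k l c) s t ->
  [/\ ~ F1 m n k l c s t, ~ F3 m n k l c s t, ~ F7 m n k l c s t,
      ~ F8 m n k l c s t & ~ F9 m n k l c s t].
Proof.
move=> _ _ _ l1 c1 d1 _ _ _ _ le_st /ham_pathP [f [N [hw f0 fN]]]; subst s t.
have cln : c + l < n by lia.
split.
- exact: ham_walk_no_cut hw.
- exact: ham_walk_not_F3 hw.
- exact: ham_walk_not_F7 l1 c1 cln hw le_st.
- exact: ham_walk_not_F8 hw.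
- exact: ham_walk_not_F9 l1 c1 cln hw.
Qed.
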